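(* Consider any run of Algorithm 1 (described in the context). Whenever step (5) is executed with current set $S$ and current point $\bar x$, the inequality $$\sum_{i=1}^{k} d^k_ic^ix\ \ge\ \sum_{i=1}^{k-1}d^k_ic^i\bar x+d^k_k\lceil c^k\bar x\rceil$$ added in that step is satisfied by every point of $S\cap\mathbb{Z}^n$ and is violated by $\bar x$ (i.e. it is a cutting plane). Moreover, Algorithm 1 terminates after a finite number of iterations.
   Context: A lattice basis of $\mathbb{Z}^n$ is a set of $n$ linearly independent $c^1,\dots,c^n\in\mathbb{Z}^n$ such that every $v\in\mathbb{Z}^n$ is an integer combination of them. The associated lexicographic order: $x\prec y$ iff $x\ne y$ and $c^ix<c^iy$ for the smallest $i$ with $c^ix\ne c^iy$. For nonempty compact $T\subseteq\mathbb{R}^n$, the lex-min point of $T$ is the unique $\bar x\in T$ with $\bar x\prec x$ for all $x\in T\setminus\{\bar x\}$ (minimize $c^1x$ over $T$, then $c^2x$ over the minimizers, etc.). $K=\{x: c^ix\ge0,\ i=1,\dots,n\}$. $\mathcal S$ is a family of compact (not necessarily convex or connected) subsets of $\mathbb{R}^n$ such that $S\cap H\in\mathcal S$ whenever $S\in\mathcal S$ and $H$ is a closed halfspace; an oracle solves $\min\{cx:x\in S\}$ (or certifies $S=\emptyset$) for $S\in\mathcal S$. Algorithm 1. Input: nonempty $S\in\mathcal S$, $c\in\mathbb{Z}^n\setminus\{0\}$ with relatively prime entries, and a lattice basis $c^1,\dots,c^n$ with $c^1=c$. (1) Compute $\ell_i:=\lceil\min\{c^ix:x\in S\}\rceil$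 for all $i$; replace $S$ by $S-t$ where $t\in\mathbb{Z}^n$ is the vector with $c^it=\ell_i$ for all $i$; then replace $S$ by $S\cap K$. (2) If $S=\emptyset$, stop: no integer feasible point. (3) Else compute the lex-min point $\bar x$ of $S$. (4) If $\bar x\in\mathbb{Z}^n$, return $\bar x$. (5) Else let $k$ be the smallest index with $c^k\bar x\notin\mathbb{Z}$; set $d^k_k:=1$, $d^k_{k-1}:=\lceil c^k\bar x\rceil$ (if $k\ge2$), $d^k_i:=\lceil c^k\bar x\rceil\prod_{j=i+1}^{k-1}(c^j\bar x+1)$ for $i\le k-2$; replace $S$ by $S\cap H$, where $H$ is the halfspace $\sum_{i=1}^k d^k_ic^ix\ge\sum_{i=1}^{k-1}d^k_ic^i\bar x+d^k_k\lceil c^k\bar x\rceil$; go to (2). An iteration is one pass through steps (2)–(5). *)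

(* Points of R^n are row vectors 'rV[R]_n,
   the lattice basis c^1,...,c^n is the matrix C : 'M[int]_n whose i-th row
   (0-based index i : 'I_n) is c^(i+1). *)
From HB Require Import structures.
From mathcomp Require Import all_boot all_order all_algebra.
From mathcomp Require Import all_classical all_reals all_analysis.
Set Implicit Arguments. Unset Strict Implicit. Unset Printing Implicit Defensive.
Import Order.TTheory GRing.Theory Num.Theory.
Import numFieldNormedType.Exports.
Local Open Scope classical_set_scope.
Local Open Scope ring_scope.

Section Defs.
Variables (R : realType) (n : nat).

Definition intvec (v : 'rV[int]_n) : 'rV[R]_n := map_mx (fun z : int => z%:~R) v.

Definition cdot (C : 'M[int]_n) (i : 'I_n) (x : 'rV[R]_n) : R :=
  \sum_(j < n) (C i j)%:~R * x 0 j.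

Definition integral_pt (x : 'rV[R]_n) : Prop := forall j, x 0 j \is a Num.int.

Definition lattice_basis (C : 'M[int]_n) : Prop :=
  \rank (map_mx (fun z : int => z%:~R : R) C) = n /\
  forall v : 'rV[int]_n, exists lam : 'rV[int]_n, v = lam *m C.

Definition rel_prime_entries (c : 'rV[int]_n) : Prop :=
  (\big[gcdn/0%N]_(j < n) absz (c ord0 j))%N = 1%N.

Definition halfspace (a : 'rV[R]_n) (b : R) : set 'rV[R]_n :=
  [set x | b <= \sum_(j < n) a 0 j * x 0 j].

Definition is_minimum (A : set R) (m : R) : Prop := A m /\ forall y, A y -> m <= y.

Definition lexlt (C : 'M[int]_n) (x y : 'rV[R]_n) : Prop :=
  x <> y /\ exists i : 'I_n,
    (forall j : 'I_n, (j < i)%N -> cdot C j x = cdot C j y) /\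
    cdot C i x < cdot C i y.

Definition lexmin (C : 'M[int]_n) (T : set 'rV[R]_n) (xb : 'rV[R]_n) : Prop :=
  T xb /\ forall x, T x -> x <> xb -> lexlt C xb x.

Definition coneK (C : 'M[int]_n) : set 'rV[R]_n := [set x | forall i, 0 <= cdot C i x].

(* result of step (1): (S - t) /\ K *)
Definition step1_set (C : 'M[int]_n) (S : set 'rV[R]_n) (t : 'rV[int]_n) : set 'rV[R]_n :=
  [set y | S (y + intvec t)] `&` coneK C.

Definition first_nonint (C : 'M[int]_n) (xb : 'rV[R]_n) (k : 'I_n) : Prop :=
  ~ (cdot C k xb \is a Num.int) /\
  forall j : 'I_n, (j < k)%N -> cdot C j xb \is a Num.int.

(* coefficients d^k_i (0-based: i, k : 'I_n, only i <= k used):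
   d_k = 1,  d_i = ceil(c^k xb) * prod_{i<j<k} (c^j xb + 1) for i < k *)
Definition dcoef (C : 'M[int]_n) (xb : 'rV[R]_n) (k i : 'I_n) : R :=
  if i == k then 1
  else (Num.ceil (cdot C k xb))%:~R *
       \prod_(j < n | ((i < j)%N && (j < k)%N)) (cdot C j xb + 1).

Definition cut_plane (C : 'M[int]_n) (xb : 'rV[R]_n) (k : 'I_n) : set 'rV[R]_n :=
  [set x | \sum_(i < n | (i < k)%N) dcoef C xb k i * cdot C i xb
            + dcoef C xb k k * (Num.ceil (cdot C k xb))%:~R
           <= \sum_(i < n | (i <= k)%N) dcoef C xb k i * cdot C i x].

(* one iteration that reaches step (5): S nonempty, lex-min xb not integral,
   k first non-integral index, new set S /\ H *)
Definition alg_step (C : 'M[int]_n) (S S' : set 'rV[R]_n) : Prop :=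
  exists xb k, lexmin C S xb /\ ~ integral_pt xb /\ first_nonint C xb k /\
    S' = S `&` cut_plane C xb k.

(* the algorithm stops at the current set S: step (2) (S empty) or step (4)
   (lex-min point integral) *)
Definition alg_halts (C : 'M[int]_n) (S : set 'rV[R]_n) : Prop :=
  S = set0 \/ exists xb, lexmin C S xb /\ integral_pt xb.

End Defs.

From HB Require Import structures.
From mathcomp Require Import all_boot all_order all_algebra.
From mathcomp Require Import all_classical all_reals all_analysis.
From mathcomp Require Import ring lra zify.
Set Implicit Arguments. Unset Strict Implicit. Unset Printing Implicit Defensive.
Import Order.TTheory GRing.Theory Num.Theory.
Import numFieldNormedType.Exports.
Local Open Scope classical_set_scope.
Local Open Scope ring_scope.

(* Let x be an integral point of the cone, lexicographically larger
   than the lex-min point x̄, and j the first index with c^j x <> c^j x̄.  If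
   j < k both values are integers, so c^j x >= c^j x̄ + 1; the coefficients
   satisfy the telescoping identity d_j = ⌈c^k x̄⌉ + Σ_{j<m<k} d_m c^m x̄, so this
   unit gain pays for the right-hand side (all terms are nonnegative on the
   cone).  If j = k then c^k x >= ⌈c^k x̄⌉.  The cut is violated by x̄ since
   c^k x̄ < ⌈c^k x̄⌉.  Along an infinite run the lex-min points increase
   lexicographically.  Once c^1 x̄, ..., c^i x̄ are integral and frozen, c^(i+1) x̄
   is nondecreasing and bounded (S is compact), and whenever it is fractional
   the next cut has index i+1 and pushes it to at least its ceiling; hence it
   also freezes at an integer.  Eventually all c^i x̄ are integral, so x̄ is
   integral: a contradiction.  Since a step exists from every compact set at
   which the algorithm does not stop, some run stops. *)

Section CutCoefficients.
Variables (R : archiRealFieldType) (a : nat -> R) (k : nat).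

Definition tail_prod (m : nat) : R := \prod_(m.+1 <= l < k) (a l + 1).

Definition cut_coef (m : nat) : R :=
  if m == k then 1 else (Num.ceil (a k))%:~R * tail_prod m.

Lemma tail_prod_telescope j : (j < k)%N ->
  tail_prod j = 1 + \sum_(j.+1 <= m < k) a m * tail_prod m.
Proof.
move=> ltjk; have [d kE] : exists d, k = (j + d.+1)%N by exists (k - j.+1)%N; lia.
elim: d j ltjk kE => [|d IH] j ltjk kE.
  by rewrite /tail_prod !big_geq ?kE ?addn1 // addr0.
have ltj1k : (j.+1 < k)%N by lia.
rewrite {1}/tail_prod (big_ltn ltj1k) (big_ltn ltj1k) -/(tail_prod j.+1).
rewrite (IH j.+1 ltj1k); last by lia.
ring.
Qed.

Lemma cut_coef_telescope j : (j < k)%N ->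
  cut_coef j = (Num.ceil (a k))%:~R + \sum_(j.+1 <= m < k) cut_coef m * a m.
Proof.
move=> ltjk; rewrite /cut_coef (ltn_eqF ltjk) tail_prod_telescope //.
rewrite mulrDr mulr1 mulr_sumr; congr (_ + _).
by apply: eq_big_nat => m /andP[_ ltmk]; rewrite (ltn_eqF ltmk) /=; ring.
Qed.

Hypothesis a_ge0 : forall m, (m <= k)%N -> 0 <= a m.

Lemma cut_coef_ge0 m : 0 <= cut_coef m.
Proof.
rewrite /cut_coef; case: eqP => // _; apply: mulr_ge0.
  by rewrite ler0z ceil_ge0 (lt_le_trans _ (@a_ge0 k (leqnn k))) // ltrN10.
rewrite /tail_prod big_nat_cond; apply: prodr_ge0 => l /andP[/andP[_ ltlk] _].
by rewrite addr_ge0 // a_ge0 // ltnW.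
Qed.

End CutCoefficients.

Section CutValid.
Variables (R : archiRealFieldType) (a b : nat -> R) (k j : nat).
Hypotheses (a_int : forall m, (m < k)%N -> a m \is a Num.int)
  (ak_nint : a k \isn't a Num.int) (a_ge0 : forall m, (m <= k)%N -> 0 <= a m)
  (b_ge0 : forall m, (m <= k)%N -> 0 <= b m) (b_int : forall m, (m <= k)%N -> b m \is a Num.int)
  (eq_ab : forall m, (m < j)%N -> a m = b m) (lt_ab : a j < b j).

(* If [b] first exceeds [a] at [j < k], the gain [b j - a j >= 1] is worth
   [cut_coef j], which by [cut_coef_telescope] covers all later terms. *)
Lemma cut_coef_valid :
  \sum_(0 <= m < k) cut_coef a k m * a m + (Num.ceil (a k))%:~R <=
  \sum_(0 <= m < k) cut_coef a k m * b m + b k.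
Proof.
have [ltjk|ltkj|ejk] := ltngtP j k.
- rewrite !(big_cat_nat (leq0n j) (ltnW ltjk)) /= !(big_ltn ltjk) /=.
  have -> : \sum_(0 <= m < j) cut_coef a k m * a m = \sum_(0 <= m < j) cut_coef a k m * b m.
    by apply: eq_big_nat => m /andP[_ ltmj]; rewrite eq_ab.
  have aj1_le_bj : a j + 1 <= b j.
    have [/intrP[z ez] /intrP[w ew]] := (a_int ltjk, b_int (ltnW ltjk)).
    by move: lt_ab; rewrite ez ew ltr_int -lezD1 -(ler_int R) intrD.
  set Ta := (X in _ + (_ + X) + _ <= _); set Tb := (X in _ <= _ + (_ + X) + _).
  have Tb_ge0 : 0 <= Tb.
    rewrite /Tb big_nat_cond; apply: sumr_ge0 => m /andP[/andP[_ ltmk] _].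
    by rewrite mulr_ge0 ?(cut_coef_ge0 a_ge0) // b_ge0 // ltnW.
  have := ler_wpM2l (cut_coef_ge0 a_ge0 j) aj1_le_bj.
  rewrite (cut_coef_telescope a ltjk) -/Ta mulrDr mulr1.
  have := b_ge0 (leqnn k); lra.
- by move: ak_nint; rewrite eq_ab ?b_int.
- have -> : \sum_(0 <= m < k) cut_coef a k m * a m = \sum_(0 <= m < k) cut_coef a k m * b m.
    by apply: eq_big_nat => m /andP[_ ltmk]; rewrite eq_ab ?ejk.
  rewrite lerD2l; have /intrP[w ew] := b_int (leqnn k).
  by rewrite ew ler_int ceil_le_int -ew -ejk ltW.
Qed.
End CutValid.

Lemma nondecreasing_bounded_int_stabilizes (h : nat -> int) (B : int) :
  (forall q, h q <= h q.+1) -> (forall q, h q <= B) ->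
  exists p, forall q, (p <= q)%N -> h q = h p.
Proof.
move=> h_step h_ub; apply: contrapT => /forallNP unstable.
have h_mono : {homo h : p q / (p <= q)%N >-> p <= q}.
  by apply: homo_leq; [exact: lexx | exact: le_trans | exact: h_step].
have grow N : exists p, h 0%N + N%:Z <= h p.
  elim: N => [|N [p hp]]; first by exists 0%N; rewrite addr0.
  have /existsNP[q /not_implyP[lepq neq]] := unstable p.
  exists q; have : h p < h q by rewrite lt_neqAle h_mono // andbT eq_sym; apply/eqP.
  lia.
have [p] := grow `|B - h 0%N|.+1; have := h_ub p; lia.
Qed.

Section CellIndex.
Variable R : archiRealFieldType.
Implicit Types x y : R.

(* [cell_index x] numbers the cells of the partition of the line into the
   integers and the open intervals between them: [2z] at [z], [2z+1] on [(z, z+1)]. *)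
Definition cell_index x : int := Num.floor x + Num.ceil x.

Lemma le_cell_index : {homo cell_index : x y / x <= y}.
Proof. by move=> x y lexy; rewrite lerD ?le_floor ?le_ceil. Qed.

Lemma cell_index_int_eq x y : x \is a Num.int -> x <= y ->
  cell_index x = cell_index y -> y = x.
Proof.
move=> /intrP[z ->] lezy; rewrite /cell_index intrKfloor intrKceil => cellE.
have z_le_floor : z <= Num.floor y by rewrite floor_ge_int.
have z_le_ceil : z <= Num.ceil y by move: (le_ceil lezy); rewrite intrKceil.
have ceil_yE : Num.ceil y = z by lia.
by apply: le_anti; rewrite lezy andbT -ceil_le_int ceil_yE.
Qed.

Lemma cell_index_ceil_lt x y : x \isn't a Num.int -> (Num.ceil x)%:~R <= y ->
  cell_index x < cell_index y.
Proof.
move=> x_nint ceil_le_y.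
have ceilE : Num.ceil x = Num.floor x + 1 by rewrite ceil_floor x_nint.
have : Num.ceil x <= Num.floor y by rewrite floor_ge_int.
have : Num.ceil x <= Num.ceil y by move: (le_ceil ceil_le_y); rewrite intrKceil.
rewrite /cell_index; lia.
Qed.

Lemma ceil_jump_stabilizes (f : nat -> R) (U : R) :
  (forall q, f q <= U) -> (forall q, f q <= f q.+1) ->
  (forall q, f q \isn't a Num.int -> (Num.ceil (f q))%:~R <= f q.+1) ->
  exists2 p, f p \is a Num.int & forall q, (p <= q)%N -> f q = f p.
Proof.
move=> f_ub f_step f_jump.
have [|p cell_const] := @nondecreasing_bounded_int_stabilizes (cell_index \o f)
    (cell_index U) (fun q => le_cell_index (f_step q)).
  by move=> q; apply: le_cell_index.
have {}cell_const q : (p <= q)%N -> cell_index (f q) = cell_index (f p) := cell_const q.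
have f_int q : (p <= q)%N -> f q \is a Num.int.
  move=> lepq; apply: contraT => f_nint; have := cell_index_ceil_lt f_nint (f_jump q f_nint).
  by rewrite cell_const // (cell_const q.+1) ?ltxx // ltnW.
exists p; first exact: f_int.
elim=> [|q IH]; first by rewrite leqn0 => /eqP ->.
rewrite leq_eqVlt => /orP[/eqP <- //|]; rewrite ltnS => lepq.
rewrite -IH //; apply: cell_index_int_eq; rewrite ?f_int //.
by rewrite cell_const ?(cell_const q.+1) // ltnW.
Qed.
End CellIndex.

Section LexMin.
Variables (T : topologicalType) (R : realType).
Implicit Types (fs : seq (T -> R)) (A : set T).

Definition lex_lt fs (x y : T) : Prop :=
  exists2 i, (i < size fs)%N &
    (forall j, (j < i)%N -> fs`_j x = fs`_j y) /\ fs`_i x < fs`_i y.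

Lemma compact_lexmin fs A : compact A -> A !=set0 ->
  (forall f, f \in fs -> continuous f) ->
  exists2 x, A x & forall y, A y ->
    (forall j, (j < size fs)%N -> fs`_j x = fs`_j y) \/ lex_lt fs x y.
Proof.
elim: fs A => [|f fs IH] A cA [x0 Ax0] fs_cont.
  by exists x0 => // y _; left.
have [xm /set_mem Axm xm_min] := compact_EVT_min (ex_intro _ x0 Ax0) cA
  (continuous_subspaceT (fs_cont f (mem_head f fs))).
pose A' := A `&` f @^-1` [set f xm].
have cA' : compact A'.
  apply: compact_closedI cA _; apply: preimage_closed; last exact: closed_eq.
  by move=> x _; apply: fs_cont; rewrite mem_head.
have [||x [Ax fx] x_min] := IH A' cA'; first by exists xm.
  by move=> g g_fs; apply: fs_cont; rewrite inE g_fs orbT.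
exists x => // y Ay; have [fy|fy] := eqVneq (f y) (f xm).
- have [eq_xy|[i lt_i [eq_pre lt_xy]]] := x_min y (conj Ay fy).
    by left => -[|j] //= ltj; [rewrite fx fy | apply: eq_xy].
  by right; exists i.+1 => //; split => // -[|j] //= ltj; [rewrite fx fy | apply: eq_pre].
- right; exists 0%N => //=; split => //.
  by rewrite fx lt_neqAle eq_sym fy xm_min //; apply/mem_set.
Qed.
End LexMin.

Section LatticeBasis.
Variables (R : realType) (n : nat) (C : 'M[int]_n).
Implicit Types (x y : 'rV[R]_n) (A : set 'rV[R]_n).

Lemma continuous_cdot i : continuous (fun x : 'rV[R]_n => cdot C i x).
Proof.
apply: continuous_big => [|j _]; first exact: add_continuous.
move=> x; apply: (@continuous_comp _ _ _ (fun y : 'rV[R]_n => y 0 j) ( *%R (C i j)%:~R)).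
  exact: coord_continuous.
exact: mulrl_continuous.
Qed.

Lemma cdot_int x i : integral_pt x -> cdot C i x \is a Num.int.
Proof. by move=> x_int; apply: rpred_sum => j _; rewrite rpredM ?intr_int. Qed.

Hypothesis C_basis : lattice_basis R C.

Lemma coord_cdot : exists L : 'I_n -> 'I_n -> int,
  forall x j, x 0 j = \sum_i (L j i)%:~R * cdot C i x.
Proof.
have /choice[lam lamP] : forall j, exists lam : 'rV[int]_n, delta_mx 0 j = lam *m C.
  by move=> j; apply: C_basis.2.
exists (fun j i => lam j 0 i) => x j.
have deltaE m : ((j == m)%:R : R) = \sum_i (lam j 0 i)%:~R * (C i m)%:~R.
  have := congr1 (fun M : 'rV[int]_n => (M 0 m)%:~R : R) (lamP j).
  rewrite /= !mxE eqxx rmorph_sum (eq_bigr _ (fun i _ => intrM _ _ _)) => <-.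
  by rewrite eq_sym; case: (m == j).
transitivity (\sum_m x 0 m * (j == m)%:R).
  rewrite (bigD1 j) //= eqxx mulr1 big1 ?addr0 // => m /negbTE.
  by rewrite eq_sym => ->; rewrite mulr0.
under eq_bigr do rewrite deltaE mulr_sumr.
rewrite exchange_big; apply: eq_bigr => i _; rewrite /cdot mulr_sumr.
by apply: eq_bigr => m _; rewrite mulrCA [x 0 m * _]mulrC.
Qed.

Lemma cdot_inj x y : (forall i, cdot C i x = cdot C i y) -> x = y.
Proof.
have [L LP] := coord_cdot => eq_xy; apply/rowP => j.
by rewrite (LP x) (LP y); apply: eq_bigr => i _; rewrite eq_xy.
Qed.

Lemma integral_pt_cdot x : (forall i, cdot C i x \is a Num.int) -> integral_pt x.
Proof.
have [L LP] := coord_cdot => x_int j.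
by rewrite LP; apply: rpred_sum => i _; rewrite rpredM ?intr_int.
Qed.

Lemma first_nonint_exists x : ~ integral_pt x -> exists k, first_nonint C x k.
Proof.
move=> x_nint; have [i0 i0_nint] : exists i, cdot C i x \isn't a Num.int.
  apply: contrapT => no_i; apply/x_nint/integral_pt_cdot => i.
  by apply: contraT => i_nint; case: no_i; exists i.
case: (arg_minnP (P := fun i => cdot C i x \isn't a Num.int) val i0_nint).
move=> k k_nint k_min; exists k; split; first exact/negP.
by move=> j ltjk; apply: contraT => /k_min; rewrite leqNgt ltjk.
Qed.

Definition cdot_seq : seq ('rV[R]_n -> R) := [seq cdot C i | i <- enum 'I_n].

Lemma cdot_seqE (i : 'I_n) : cdot_seq`_i = cdot C i.
Proof. by rewrite (nth_map i) ?nth_ord_enum // size_enum_ord. Qed.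

Lemma lexmin_exists A : compact A -> A !=set0 -> exists xb, lexmin C A xb.
Proof.
move=> cA A0; have [|xb Axb xb_min] := compact_lexmin cA A0 (fs := cdot_seq).
  by move=> _ /mapP[i _ ->]; apply: continuous_cdot.
have size_fs : size cdot_seq = n by rewrite size_map size_enum_ord.
exists xb; split => // x Ax neq_x.
case: (xb_min x Ax) => [eq_xb|[i lt_in [eq_pre lt_i]]].
  by case: neq_x; apply: cdot_inj => i; rewrite -cdot_seqE eq_xb ?size_fs.
rewrite size_fs in lt_in; split; first by move=> e; apply: neq_x.
exists (Ordinal lt_in); split; last by rewrite -cdot_seqE.
move=> j ltji; rewrite -cdot_seqE; exact: eq_pre.
Qed.
End LatticeBasis.

Lemma big_ord_interval (T : Type) (idx : T) (op : Monoid.law idx) (n lo hi : nat)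
    (F : nat -> T) : (hi <= n)%N ->
  \big[op/idx]_(j < n | (lo <= j < hi)%N) F j = \big[op/idx]_(lo <= j < hi) F j.
Proof.
move=> le_hi_n; rewrite (big_nat_widen lo hi n) // big_geq_mkord.
by apply: eq_bigl => j; rewrite andbC.
Qed.

Section Cut.
Variables (R : realType) (n : nat) (C : 'M[int]_n).
Implicit Types (x xb : 'rV[R]_n) (k : 'I_n).

(* [cseq x m] is [c^m x] for [m < n] (and 0 beyond), so that the cut can be
   analysed with the [nat]-indexed [cut_coef]. *)
Local Notation cseq x := (fun m => (cdot_seq R C)`_m x).

Lemma cseq_ord x m (ltmn : (m < n)%N) : cseq x m = cdot C (Ordinal ltmn) x.
Proof. by rewrite /= (cdot_seqE R C (Ordinal ltmn)). Qed.

Lemma dcoefE xb k (i : 'I_n) : dcoef C xb k i = cut_coef (cseq xb) k i.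
Proof.
rewrite /dcoef /cut_coef /tail_prod cdot_seqE -[(i : nat) == k]/(i == k).
case: (i == k) => //; rewrite -(big_ord_interval _ _ _ (ltnW (ltn_ord k))).
by congr (_ * _); apply: eq_bigr => j _; rewrite cdot_seqE.
Qed.

Lemma cut_planeE xb k x : cut_plane C xb k x <->
  \sum_(0 <= m < k) cut_coef (cseq xb) k m * cseq xb m + (Num.ceil (cseq xb k))%:~R <=
  \sum_(0 <= m < k) cut_coef (cseq xb) k m * cseq x m + cseq x k.
Proof.
have ltkn := ltn_ord k.
have lhsE : \sum_(i < n | (i < k)%N) dcoef C xb k i * cdot C i xb =
            \sum_(0 <= m < k) cut_coef (cseq xb) k m * cseq xb m.
  rewrite -(big_ord_interval _ 0 _ (ltnW ltkn)).
  by apply: eq_bigr => i _; rewrite dcoefE cdot_seqE.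
have rhsE : \sum_(i < n | (i <= k)%N) dcoef C xb k i * cdot C i x =
            \sum_(0 <= m < k) cut_coef (cseq xb) k m * cseq x m + cseq x k.
  have -> : cseq x k = cut_coef (cseq xb) k k * cseq x k by rewrite /cut_coef eqxx mul1r.
  rewrite -big_nat_recr // -(big_ord_interval _ 0 _ ltkn).
  by apply: eq_bigr => i _; rewrite dcoefE cdot_seqE.
by rewrite /cut_plane /= lhsE rhsE dcoefE /cut_coef eqxx mul1r cdot_seqE.
Qed.

Lemma cut_plane_valid xb k x : coneK C xb -> coneK C x -> integral_pt x ->
  lexlt C xb x -> first_nonint C xb k -> cut_plane C xb k x.
Proof.
move=> Kxb Kx x_int [_ [j [eq_pre lt_j]]] [k_nint pre_int].
have ltkn := ltn_ord k; have ltjn := ltn_ord j.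
apply/cut_planeE; apply: (cut_coef_valid (j := j)).
- by move=> m ltmk; rewrite (cseq_ord _ (ltn_trans ltmk ltkn)) pre_int.
- by rewrite cdot_seqE; apply/negP.
- by move=> m lemk; rewrite (cseq_ord _ (leq_ltn_trans lemk ltkn)) Kxb.
- by move=> m lemk; rewrite (cseq_ord _ (leq_ltn_trans lemk ltkn)) Kx.
- by move=> m lemk; rewrite (cseq_ord _ (leq_ltn_trans lemk ltkn)) cdot_int.
- by move=> m ltmj; rewrite !(cseq_ord _ (ltn_trans ltmj ltjn)) eq_pre.
- by rewrite !cdot_seqE.
Qed.

Lemma cut_plane_nmem xb k : first_nonint C xb k -> ~ cut_plane C xb k xb.
Proof.
move=> [k_nint _] /cut_planeE; apply/negP; rewrite -ltNge ltrD2l cdot_seqE.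
rewrite lt_neqAle ceil_ge andbT; apply/eqP => eq_ceil.
by apply: k_nint; rewrite eq_ceil intr_int.
Qed.

Lemma cut_plane_ceil xb k x : cut_plane C xb k x ->
  (forall j : 'I_n, (j < k)%N -> cdot C j x = cdot C j xb) ->
  (Num.ceil (cdot C k xb))%:~R <= cdot C k x.
Proof.
move=> /cut_planeE cut eq_pre; have ltkn := ltn_ord k.
have sumE : \sum_(0 <= m < k) cut_coef (cseq xb) k m * cseq x m =
            \sum_(0 <= m < k) cut_coef (cseq xb) k m * cseq xb m.
  by apply: eq_big_nat => m /andP[_ ltmk]; rewrite !(cseq_ord _ (ltn_trans ltmk ltkn)) eq_pre.
by move: cut; rewrite sumE lerD2l !cdot_seqE.
Qed.

End Cut.

Section InfiniteRun.
Variables (R : realType) (n : nat) (C : 'M[int]_n) (Sq : nat -> set 'rV[R]_n).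
Variables (xb : nat -> 'rV[R]_n) (kk : nat -> 'I_n).
Hypotheses (xb_lexmin : forall p, lexmin C (Sq p) (xb p))
  (kk_first : forall p, first_nonint C (xb p) (kk p))
  (Sq_succ : forall p, Sq p.+1 = Sq p `&` cut_plane C (xb p) (kk p))
  (Sq0_bounded : forall i, exists U, forall x, Sq 0%N x -> cdot C i x <= U).

Lemma run_subset p : Sq p `<=` Sq 0%N.
Proof. by elim: p => [//|p IH] x; rewrite Sq_succ => -[/IH]. Qed.

Lemma xb_succ p : xb p.+1 = xb p \/ lexlt C (xb p) (xb p.+1).
Proof.
have [+ _] := xb_lexmin p.+1; rewrite Sq_succ => -[Sxb1 cut1].
have [->|neq] := pselect (xb p.+1 = xb p); [by left | right].
exact: (xb_lexmin p).2.
Qed.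

Lemma xb_cut p : cut_plane C (xb p) (kk p) (xb p.+1).
Proof. by have [+ _] := xb_lexmin p.+1; rewrite Sq_succ => -[]. Qed.

Definition settled (i p : nat) := forall q, (p <= q)%N -> forall l : 'I_n, (l < i)%N ->
  cdot C l (xb q) = cdot C l (xb p) /\ cdot C l (xb p) \is a Num.int.

Section Settled.
Variables (i p0 : nat) (io : 'I_n).
Hypotheses (settled_i : settled i p0) (io_i : val io = i).

Lemma settled_mono p : (p0 <= p)%N -> cdot C io (xb p) <= cdot C io (xb p.+1).
Proof.
move=> lep0p; case: (xb_succ p) => [-> //|[_ [j [eq_pre lt_j]]]].
have [ltji|ltij|eqji] := ltngtP j i.
- have [eq_p _] := settled_i lep0p ltji; have [eq_p1 _] := settled_i (leqW lep0p) ltji.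
  by move: lt_j; rewrite eq_p eq_p1 ltxx.
- by rewrite eq_pre // io_i.
- have -> : io = j by apply: val_inj; rewrite /= io_i eqji.
  exact: ltW lt_j.
Qed.

Lemma settled_jump p : (p0 <= p)%N -> cdot C io (xb p) \isn't a Num.int ->
  (Num.ceil (cdot C io (xb p)))%:~R <= cdot C io (xb p.+1).
Proof.
move=> lep0p io_nint; have [kk_nint pre_int] := kk_first p.
have kk_io : kk p = io.
  apply: val_inj; apply/eqP; rewrite eqn_leq io_i; apply/andP; split.
    rewrite leqNgt; apply/negP => lt_i_kk; move/negP: io_nint; apply.
    by apply: pre_int; rewrite io_i.
  rewrite leqNgt; apply/negP => lt_kk_i; apply: kk_nint.
  by have [-> ->] := settled_i lep0p lt_kk_i.
rewrite -kk_io; apply: cut_plane_ceil (xb_cut p) _ => j; rewrite kk_io io_i => ltji.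
by have [-> _] := settled_i lep0p ltji; have [-> _] := settled_i (leqW lep0p) ltji.
Qed.
End Settled.

Lemma settled_succ i p0 : (i < n)%N -> settled i p0 -> exists p1, settled i.+1 p1.
Proof.
move=> lt_in settled_i; pose io := Ordinal lt_in.
pose f q := cdot C io (xb (q + p0)).
have [U U_ub] := Sq0_bounded io.
have [q|q|q|p f_int f_const] := @ceil_jump_stabilizes _ f U.
- exact/U_ub/run_subset/(xb_lexmin _).1.
- by apply: (settled_mono settled_i) => //; apply: leq_addl.
- by apply: (settled_jump settled_i) => //; apply: leq_addl.
exists (p + p0)%N => q lepq l; rewrite ltnS leq_eqVlt => /orP[/eqP l_i|lt_li].
  have -> : l = io by apply: val_inj.
  have [d qE] : exists d, q = (d + p0)%N.
    by exists (q - p0)%N; rewrite subnK // (leq_trans (leq_addl p p0)).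
  rewrite qE leq_add2r in lepq; rewrite qE /f in f_const f_int *.
  by split; [apply: f_const | ].
have [-> _] := settled_i _ (leq_trans (leq_addl p p0) lepq) _ lt_li.
by have [-> ->] := settled_i _ (leq_addl p p0) _ lt_li.
Qed.

Lemma settled_all : exists p, settled n p.
Proof.
suff: forall i, (i <= n)%N -> exists p, settled i p by apply.
elim=> [_|i IH lt_in]; first by exists 0%N => q _ l.
by have [p0] := IH (ltnW lt_in); apply: settled_succ.
Qed.

Lemma infinite_run_false : False.
Proof.
have [p settled_n] := settled_all; have [kk_nint _] := kk_first p.
by apply: kk_nint; have [_] := settled_n p (leqnn p) (kk p) (ltn_ord _).
Qed.

End InfiniteRun.

Lemma no_infinite_run (R : realType) (n : nat) (C : 'M[int]_n) (Sq : nat -> set 'rV[R]_n) :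
  (forall i, exists U, forall x, Sq 0%N x -> cdot C i x <= U) ->
  ~ (forall p, alg_step C (Sq p) (Sq p.+1)).
Proof.
move=> Sq0_bounded run.
have /choice[xk xkP] : forall p, exists xk : 'rV[R]_n * 'I_n,
    [/\ lexmin C (Sq p) xk.1, first_nonint C xk.1 xk.2 &
        Sq p.+1 = Sq p `&` cut_plane C xk.1 xk.2].
  by move=> p; have [xb [k [? [_ [? ?]]]]] := run p; exists (xb, k).
by apply: (@infinite_run_false R n C Sq (fst \o xk) (snd \o xk)) => p; case: (xkP p).
Qed.

Section Algorithm.
Variables (R : realType) (n : nat) (C : 'M[int]_n).
Implicit Types (S T : set 'rV[R]_n).

Lemma alg_step_subset S T : alg_step C S T -> T `<=` S.
Proof. by move=> [xb [k [_ [_ [_ ->]]]]] x []. Qed.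

Lemma run_subset_init (Sq : nat -> set 'rV[R]_n) m :
  (forall p, (p < m)%N -> alg_step C (Sq p) (Sq p.+1)) -> Sq m `<=` Sq 0%N.
Proof.
elim: m => [_ //|m IH] run x Sx; apply: IH (alg_step_subset (run m (ltnSn m)) Sx).
by move=> p ltpm; apply/run/ltnW.
Qed.

Lemma closed_cut_plane (xb : 'rV[R]_n) k : closed (cut_plane C xb k).
Proof.
pose lhs x := \sum_(i < n | (i <= k)%N) dcoef C xb k i * cdot C i x.
pose rhs := \sum_(i < n | (i < k)%N) dcoef C xb k i * cdot C i xb
            + dcoef C xb k k * (Num.ceil (cdot C k xb))%:~R.
have lhs_cont : continuous lhs.
  apply: continuous_big => [|i _ x]; first exact: add_continuous.
  by apply: continuousM; [exact: cst_continuous | exact: continuous_cdot].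
have -> : cut_plane C xb k = lhs @^-1` [set y | rhs <= y] by [].
apply: preimage_closed; last exact: closed_ge.
by move=> x _; exact: lhs_cont.
Qed.

Lemma closed_coneK : closed (coneK C : set 'rV[R]_n).
Proof.
have -> : (coneK C : set 'rV[R]_n) =
    \bigcap_(i in [set: 'I_n]) ((fun x : 'rV[R]_n => cdot C i x) @^-1` [set y | 0 <= y]).
  by apply/seteqP; split => x /= x_ge0 i; [move=> _ | ]; apply: x_ge0.
apply: closed_bigI => i _; apply: preimage_closed; last exact: closed_ge.
by move=> x _; apply: continuous_cdot.
Qed.

Lemma compact_cdot_ub (A : set 'rV[R]_n) i : compact A ->
  exists U, forall x, A x -> cdot C i x <= U.
Proof.
move=> cA; have [[x0 Ax0]|A0] := pselect (A !=set0); last first.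
  by exists 0 => x Ax; case: A0; exists x.
have [xm _ xm_max] := compact_EVT_max (ex_intro _ x0 Ax0) cA
  (continuous_subspaceT (@continuous_cdot R n C i)).
by exists (cdot C i xm) => x Ax; apply/xm_max/mem_set.
Qed.

Lemma compact_step1_set S t : compact S -> compact (step1_set C S t).
Proof.
move=> cS; apply: compact_closedI; last exact: closed_coneK.
have -> : [set y | S (y + intvec R t)] = (fun x => x - intvec R t) @` S.
  apply/seteqP; split => [y Sy | _ [x Sx <-]] /=; last by rewrite subrK.
  by exists (y + intvec R t); rewrite ?addrK.
apply: continuous_compact cS; apply: continuous_subspaceT => x.
exact: (cvgB cvg_id (cvg_cst _)).
Qed.

Hypothesis C_basis : lattice_basis R C.

Lemma alg_step_exists T : compact T -> ~ alg_halts C T ->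
  exists2 T', alg_step C T T' & compact T'.
Proof.
move=> cT T_run.
have [|xb xb_lexmin] := lexmin_exists C_basis cT.
  by apply/set0P/eqP => T0; apply: T_run; left.
have xb_nint : ~ integral_pt xb by move=> xb_int; apply: T_run; right; exists xb.
have [k k_first] := first_nonint_exists C_basis xb_nint.
exists (T `&` cut_plane C xb k); first by exists xb, k.
by apply: compact_closedI cT _; apply: closed_cut_plane.
Qed.

Lemma halting_run_exists S0 : compact S0 ->
  (forall Sq : nat -> set 'rV[R]_n, Sq 0%N = S0 -> ~ (forall p, alg_step C (Sq p) (Sq p.+1))) ->
  exists (M : nat) (Sq : nat -> set 'rV[R]_n), Sq 0%N = S0 /\
    (forall p, (p < M)%N -> alg_step C (Sq p) (Sq p.+1)) /\ alg_halts C (Sq M).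
Proof.
move=> cS0 no_infinite; apply: contrapT => no_halting.
have /choice[next nextP] : forall T, exists T',
    compact T /\ ~ alg_halts C T -> alg_step C T T' /\ compact T'.
  move=> T; have [[cT T_run]|not_run] := pselect (compact T /\ ~ alg_halts C T).
    by have [T' ? ?] := alg_step_exists cT T_run; exists T'.
  by exists T => /not_run [].
pose Sq p := iter p next S0.
have run p : compact (Sq p) /\ forall q, (q < p)%N -> alg_step C (Sq q) (Sq q.+1).
  elim: p => [|p [cSp run_p]]; first by split=> // q; rewrite ltn0.
  have Sp_run : ~ alg_halts C (Sq p) by move=> halts; apply: no_halting; exists p, Sq.
  have [step cSp1] := nextP _ (conj cSp Sp_run).
  by split => // q; rewrite ltnS leq_eqVlt => /orP[/eqP -> //|]; apply: run_p.
by apply: (no_infinite Sq erefl) => p; apply: (run p.+1).2.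
Qed.

End Algorithm.

Theorem proposition2 (R : realType) (n : nat)
  (SS : set (set 'rV[R]_n))
  (SS_compact : forall T, SS T -> compact T)
  (SS_half : forall T (a : 'rV[R]_n) (b : R), SS T -> a != 0 ->
               SS (T `&` halfspace a b))
  (S : set 'rV[R]_n) (hS : SS S) (hSne : S !=set0)
  (c : 'rV[int]_n) (hc0 : c != 0) (hcp : rel_prime_entries c)
  (C : 'M[int]_n) (hC : lattice_basis R C)
  (hc1 : forall i : 'I_n, val i = 0%N -> row i C = c)
  (l : 'I_n -> int)
  (hl : forall i, exists2 m, is_minimum [set cdot C i x | x in S] m & l i = Num.ceil m)
  (t : 'rV[int]_n) (ht : forall i, cdot C i (intvec R t) = (l i)%:~R) :
  let S0 := step1_set C S t in
  (* every step (5) adds a valid cutting plane *)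
  (forall (m : nat) (Sq : nat -> set 'rV[R]_n),
     Sq 0%N = S0 -> (forall p, (p < m)%N -> alg_step C (Sq p) (Sq p.+1)) ->
     forall (xb : 'rV[R]_n) (k : 'I_n),
       lexmin C (Sq m) xb -> ~ integral_pt xb -> first_nonint C xb k ->
       (forall x, Sq m x -> integral_pt x -> cut_plane C xb k x) /\ ~ cut_plane C xb k xb)
  /\
  (* finite termination: no infinite run, and the run stops after finitely
     many iterations *)
  (forall Sq : nat -> set 'rV[R]_n,
     Sq 0%N = S0 -> ~ (forall p, alg_step C (Sq p) (Sq p.+1)))
  /\
  (exists (M : nat) (Sq : nat -> set 'rV[R]_n),
     Sq 0%N = S0 /\ (forall p, (p < M)%N -> alg_step C (Sq p) (Sq p.+1)) /\
     alg_halts C (Sq M)).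
Proof.
move=> S0; have cS0 : compact S0 by apply/compact_step1_set/SS_compact.
have no_infinite (Sq : nat -> set 'rV[R]_n) : Sq 0%N = S0 ->
    ~ (forall p, alg_step C (Sq p) (Sq p.+1)).
  by move=> Sq0; apply: no_infinite_run => i; rewrite Sq0; apply: compact_cdot_ub.
split; last by split => //; apply: halting_run_exists.
move=> m Sq Sq0 run xb k [Sxb xb_min] xb_nint k_first.
split=> [x Sx x_int|]; last exact: cut_plane_nmem.
have [_ Kxb] : S0 xb by rewrite -Sq0; apply: run_subset_init run _ Sxb.
have [_ Kx] : S0 x by rewrite -Sq0; apply: run_subset_init run _ Sx.
apply: (cut_plane_valid Kxb Kx x_int _ k_first); apply: xb_min => // x_xb.
by apply: xb_nint; rewrite -x_xb.
Qed.
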